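(* For every $\alpha\ge0$ and $\beta\ge1$, the Sharma-Mittal entropy $S_{\alpha,\beta}$ is subadditive on the majorization lattice: for all $\mathbf{p},\mathbf{q}\in\mathcal{P}_n$, $$S_{\alpha,\beta}(\mathbf{p}\wedge\mathbf{q})\le S_{\alpha,\beta}(\mathbf{p})+S_{\alpha,\beta}(\mathbf{q}).$$
   Context: $\mathcal{P}_n=\{\mathbf{p}=(p_1,\dots,p_n): p_i\ge0,\ \sum_i p_i=1\}$, with all vectors taken with components in non-increasing order. Majorization: $\mathbf{p}\preceq\mathbf{q}$ iff $\sum_{i=1}^k p_i\le\sum_{i=1}^k q_i$ for all $k$. The greatest lower bound in the lattice $(\mathcal{P}_n,\preceq)$ is $\mathbf{p}\wedge\mathbf{q}=\mathbf{r}$ with $\sum_{i=1}^k r_i=\min\{\sum_{i=1}^k p_i,\sum_{i=1}^k q_i\}$ for $k=1,\dots,n$. The Sharma-Mittal entropy is $S_{\alpha,\beta}(\mathbf{p})=\frac{1}{1-\beta}\left[\left(\sum_{i=1}^n p_i^\alpha\right)^{\frac{1-\beta}{1-\alpha}}-1\right]$, with values at $\alpha=1$ and/or $\beta=1$ defined by the corresponding limits. *)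

From HB Require Import structures.
From mathcomp Require Import all_boot all_order all_algebra.
From mathcomp Require Import all_classical all_reals all_analysis.
Set Implicit Arguments. Unset Strict Implicit. Unset Printing Implicit Defensive.
Import Order.TTheory GRing.Theory Num.Theory.
Local Open Scope ring_scope.

Section SM.
Variables (R : realType) (n : nat).

Definition prob_vec (p : 'I_n -> R) : Prop :=
  (forall i, 0 <= p i) /\ (\sum_(i < n) p i = 1) /\
  (forall i j : 'I_n, (i <= j)%N -> p j <= p i).

(* partial sum p_1 + ... + p_k  (indices 0..k-1 in 0-based ordinals) *)
Definition psum (p : 'I_n -> R) (k : nat) : R := \sum_(i < n | (i < k)%N) p i.

(* greatest lower bound: the vector whose k-th partial sums are the minima *)
Definition meet (p q : 'I_n -> R) : 'I_n -> R :=
  fun i => Num.min (psum p i.+1) (psum q i.+1) - Num.min (psum p i) (psum q i).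

Definition shannon (p : 'I_n -> R) : R := - \sum_(i < n | 0 < p i) p i * ln (p i).

(* sum_i p_i^alpha, over the support (so that alpha = 0 counts the support) *)
Definition powsum (alpha : R) (p : 'I_n -> R) : R :=
  \sum_(i < n | 0 < p i) p i `^ alpha.

(* Sharma-Mittal entropy, with the limit values at alpha = 1 and/or beta = 1 *)
Definition sharma_mittal (alpha beta : R) (p : 'I_n -> R) : R :=
  if alpha == 1 then
    (if beta == 1 then shannon p
     else (expR ((1 - beta) * shannon p) - 1) / (1 - beta))
  else
    (if beta == 1 then ln (powsum alpha p) / (1 - alpha)
     else ((powsum alpha p) `^ ((1 - beta) / (1 - alpha)) - 1) / (1 - beta)).

End SM.

(* Let r be the meet of p and q. Any k entries of the product distribution
   (p_i q_j)_{i,j} sum to at most the sum of the k largest p_i, and likewise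
   for q, hence to at most the k-th partial sum of r: the product is majorized
   by r (padded with zeros). Karamata's inequality, proved from supporting
   lines, then gives H(r) <= H(p (x) q) = H(p) + H(q) for the Shannon entropy
   and sum r_i^a <= (sum p_i^a)(sum q_i^a) for a <= 1 (reversed for a >= 1),
   i.e. every Renyi entropy H_a is subadditive on the meet. Finally
   S_{a,b} = (exp ((1 - b) H_a) - 1) / (1 - b), which for b > 1 is an
   increasing function of H_a >= 0 that is subadditive on [0, +oo). *)

From mathcomp Require Import all_boot all_order all_algebra.
From mathcomp Require Import all_classical all_reals all_analysis.
From mathcomp Require Import ring lra.
Import Order.TTheory GRing.Theory Num.Theory.
Local Open Scope ring_scope.

Section Karamata.
Context {R : realFieldType}.

Lemma abel_summation_le (h a : nat -> R) k :
  (forall i, (i < k)%N -> h i <= h i.+1) ->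
  (forall j, (j <= k.+1)%N -> 0 <= \sum_(0 <= i < j) a i) ->
  \sum_(0 <= i < k.+1) h i * a i <= h k * \sum_(0 <= i < k.+1) a i.
Proof.
elim: k => [|k IH] h_incr a_prefix; first by rewrite !big_nat1.
rewrite big_nat_recr //= [X in _ <= _ * X]big_nat_recr //= mulrDr lerD2r.
apply: le_trans (IH _ _) _.
- by move=> i ik; apply/h_incr/ltnW.
- by move=> j jk; apply/a_prefix/(leq_trans jk).
- by apply: ler_wpM2r; [apply/a_prefix/leqW | apply: h_incr].
Qed.

Context {phi g : R -> R}.
Hypothesis g_anti : forall u v, 0 < u -> u <= v -> g v <= g u.
Hypothesis phi_tangent :
  forall u v, 0 <= u -> 0 < v -> phi u <= phi v + g v * (u - v).

Context {x y : nat -> R}.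
Hypothesis x_ge0 : forall i, 0 <= x i.
Hypothesis y_ge0 : forall i, 0 <= y i.
Hypothesis y_anti : forall i j, (i <= j)%N -> y j <= y i.

Lemma karamata_pos L : (forall i, (i < L)%N -> 0 < y i) ->
  (forall k, (k <= L)%N -> \sum_(0 <= i < k) y i <= \sum_(0 <= i < k) x i) ->
  \sum_(0 <= i < L) x i = \sum_(0 <= i < L) y i ->
  \sum_(0 <= i < L) phi (x i) <= \sum_(0 <= i < L) phi (y i).
Proof.
case: L => [|k] y_gt0 prefix total; first by rewrite !big_geq.
rewrite -subr_le0 -sumrB.
have tangent_sum : \sum_(0 <= i < k.+1) (phi (x i) - phi (y i)) <=
                   \sum_(0 <= i < k.+1) g (y i) * (x i - y i).
  rewrite big_nat_cond [X in _ <= X]big_nat_cond.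
  apply: ler_sum => i /andP[/andP[_ ik] _].
  by rewrite lerBlDl phi_tangent ?y_gt0.
apply: le_trans tangent_sum _.
have := abel_summation_le (fun i => g (y i)) (fun i => x i - y i) k.
rewrite sumrB total subrr mulr0; apply => [i ik | j jk].
- by rewrite g_anti ?y_anti ?y_gt0 // ltnW.
- by rewrite sumrB subr_ge0 prefix.
Qed.

Lemma karamata L :
  (forall k, (k <= L)%N -> \sum_(0 <= i < k) y i <= \sum_(0 <= i < k) x i) ->
  \sum_(0 <= i < L) x i = \sum_(0 <= i < L) y i ->
  \sum_(0 <= i < L) phi (x i) <= \sum_(0 <= i < L) phi (y i).
Proof.
elim: L => [|L IH] prefix total; first by rewrite !big_geq.
have [yL_gt0|yL_le0] := ltP 0 (y L).
  apply: karamata_pos => // i iL.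
  by rewrite (lt_le_trans yL_gt0) // y_anti // -ltnS.
(* the last term vanishes on both sides, since [x L <= y L = 0] *)
move: total; rewrite !big_nat_recr //= => total.
have prefixL := prefix L (leqnSn L).
have xL_ge0 := x_ge0 L; have yL_ge0 := y_ge0 L.
have [yL0 xL0] : y L = 0 /\ x L = 0 by split; lra.
rewrite xL0 yL0 lerD2r IH //; last by lra.
by move=> k kL; rewrite prefix // leqW.
Qed.

End Karamata.

Lemma decreasing_rearrangement {R : realFieldType} {T : finType} {w : T -> R} :
  (forall t, 0 <= w t) ->
  exists y : nat -> R,
    [/\ forall i, 0 <= y i,
        forall i j, (i <= j)%N -> y j <= y i,
        forall F : R -> R, \sum_(0 <= i < #|T|) F (y i) = \sum_t F (w t) &
        forall k, (k <= #|T|)%N ->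
          exists2 A : {set T}, #|A| = k & \sum_(0 <= i < k) y i = \sum_(t in A) w t].
Proof.
move=> w_ge0.
pose s := sort (fun a b => w b <= w a) (enum T).
have s_perm : perm_eq s (enum T) by rewrite perm_sort.
have s_uniq : uniq s by rewrite sort_uniq enum_uniq.
have size_s : size (map w s) = #|T| by rewrite size_map size_sort cardE.
have s_sorted : sorted (fun a b => b <= a) (map w s).
  by rewrite sorted_map; apply: sort_sorted => a b; apply: le_total.
have y_ge0 i : 0 <= nth 0 (map w s) i.
  have [i_lt|i_ge] := ltnP i (size (map w s)); last by rewrite nth_default.
  by have /mapP[t _ ->] := mem_nth 0 i_lt.
exists (nth 0 (map w s)); split => //.
- move=> i j ij; have [j_lt|j_ge] := ltnP j (size (map w s)).
    apply: (sorted_leq_nth (leT := fun a b : R => b <= a)) => //; rewrite ?inE //.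
      by move=> a b c ba cb; apply: le_trans cb ba.
    exact: leq_ltn_trans ij j_lt.
  by rewrite nth_default.
- move=> F; rewrite -size_s -(big_nth 0 xpredT F) big_map.
  by rewrite (perm_big _ s_perm) big_enum.
- move=> k kT; exists [set t in take k s].
    rewrite cardsE; move/card_uniqP: (take_uniq k s_uniq) => ->.
    by rewrite size_takel // -(size_map w) size_s.
  rewrite (eq_bigl (mem (take k s))) => [|t]; last by rewrite inE.
  rewrite -big_uniq ?take_uniq // -[RHS](big_map w xpredT id) map_take.
  rewrite [RHS](big_nth 0) size_takel ?size_s //.
  by apply: eq_big_nat => i /andP[_ ik]; rewrite nth_take.
Qed.

Section PartialSums.
Context {R : realType} {n : nat}.
Implicit Types f p q : 'I_n -> R.

Lemma psum0 f : psum f 0 = 0.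
Proof. by rewrite /psum big_pred0. Qed.

Lemma psum_full {f} {k} : (n <= k)%N -> psum f k = \sum_i f i.
Proof. by move=> nk; apply: eq_bigl => i; apply: leq_trans nk. Qed.

Lemma psumS f (i : 'I_n) : psum f i.+1 = psum f i + f i.
Proof.
rewrite /psum (bigD1 i) //= addrC; congr (_ + _); apply: eq_bigl => j.
by rewrite ltnS andbC -val_eqE -ltn_neqAle.
Qed.

Lemma le_psum {f} {k} {l} : (forall i, 0 <= f i) -> (k <= l)%N -> psum f k <= psum f l.
Proof.
move=> f_ge0 kl; rewrite [leRHS](bigID (fun i : 'I_n => (i < k)%N)) /=.
have -> : psum f k = \sum_(i < n | (i < l)%N && (i < k)%N) f i.
  by apply: eq_bigl => i; case: (ltnP i k) => ik; rewrite ?andbF ?(leq_trans ik kl).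
by rewrite lerDl sumr_ge0.
Qed.

(* An exchange argument: the elements of [B] outside the first [#|B|] indices
   are matched by as many indices inside, each carrying a larger value. *)
Lemma sum_le_psum_card {f} (B : {set 'I_n}) :
  (forall i j : 'I_n, (i <= j)%N -> f j <= f i) ->
  \sum_(i in B) f i <= psum f #|B|.
Proof.
move=> f_anti; set I := [set i : 'I_n | (i < #|B|)%N].
have card_I : #|I| = #|B|.
  have Bn : (#|B| <= n)%N by rewrite -[n in (_ <= n)%N]card_ord max_card.
  have widen_inj : injective (widen_ord Bn) by move=> a b [] ab; apply: val_inj.
  rewrite -[RHS](card_ord #|B|) -(card_imset _ widen_inj).
  apply/eq_card => i; rewrite !inE; apply/idP/imsetP => [iB | [j _ ->]] //=.
  by exists (Ordinal iB) => //; apply: val_inj.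
have -> : psum f #|B| = \sum_(i in I) f i by apply: eq_bigl => i; rewrite inE.
rewrite (big_setID I) [X in _ <= X](big_setID B) finset.setIC lerD2l.
set X := B :\: I; set Y := I :\: B.
have card_XY : #|X| = #|Y| by rewrite !cardsD card_I finset.setIC.
have XY x y : x \in X -> y \in Y -> f x <= f y.
  rewrite !inE => /andP[xI _] /andP[_ yI].
  by apply: f_anti; rewrite ltnW // (leq_trans yI) // leqNgt.
have [X0|X_gt0] := posnP #|X|.
  have /eqP : #|Y| = 0 by rewrite -card_XY.
  move: X0 => /eqP; rewrite !cards_eq0 => /eqP -> /eqP ->.
  by rewrite !big_set0.
rewrite -(ler_pM2l (_ : 0 < #|X|%:R)) ?ltr0n // {1}card_XY !mulr_natl -!sumr_const.
rewrite [X in _ <= X]exchange_big /=.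
by apply: ler_sum => y yY; apply: ler_sum => x xX; apply: XY.
Qed.

Lemma psum_meet p q k : psum (meet p q) k = Num.min (psum p k) (psum q k).
Proof.
elim: k => [|k IH]; first by rewrite !psum0 minxx.
have [kn|nk] := ltnP k n; first by rewrite (psumS _ (Ordinal kn)) IH /meet addrC subrK.
by rewrite !(psum_full (leqW nk)) -(psum_full nk) IH !psum_full.
Qed.

Lemma meet_ge0 {p q} i : (forall i, 0 <= p i) -> (forall i, 0 <= q i) ->
  0 <= meet p q i.
Proof.
move=> p_ge0 q_ge0; rewrite subr_ge0 le_min !ge_min.
by rewrite !le_psum ?orbT.
Qed.

Lemma sum_meet {p q} : \sum_i p i = 1 -> \sum_i q i = 1 -> \sum_i meet p q i = 1.
Proof.
by move=> p1 q1; rewrite -(psum_full (leqnn n)) psum_meet !psum_full // p1 q1 minxx.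
Qed.

Lemma sum_mul_le_psum {J : finType} {f} {g : J -> R} (A : {set 'I_n * J}) :
  (forall i, 0 <= f i) -> (forall i j : 'I_n, (i <= j)%N -> f j <= f i) ->
  (forall j, 0 <= g j) -> \sum_j g j = 1 ->
  \sum_(t in A) f t.1 * g t.2 <= psum f #|A|.
Proof.
move=> f_ge0 f_anti g_ge0 g1; set B := [set t.1 | t in A].
apply: (@le_trans _ _ (\sum_(i in B) f i)); last first.
  exact: le_trans (sum_le_psum_card _ f_anti) (le_psum f_ge0 (leq_imset_card _ _)).
have -> : \sum_(i in B) f i = \sum_(i in B) \sum_j f i * g j.
  by apply: eq_bigr => i _; rewrite -mulr_sumr g1 mulr1.
rewrite pair_big_dep [leRHS]big_mkcond [leLHS]big_mkcond; apply: ler_sum => t _.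
case: ifPn => tA; first by rewrite imset_f.
by case: ifP => // _; rewrite mulr_ge0.
Qed.

End PartialSums.

Section Majorization.
Context {R : realType} {phi g : R -> R}.
Hypothesis phi0 : phi 0 = 0.
Hypothesis g_anti : forall u v, 0 < u -> u <= v -> g v <= g u.
Hypothesis phi_tangent :
  forall u v, 0 <= u -> 0 < v -> phi u <= phi v + g v * (u - v).

Lemma majorized_sum_le {n} {T : finType} {w : T -> R} {r : 'I_n -> R} :
  (forall t, 0 <= w t) -> (forall i, 0 <= r i) -> (n <= #|T|)%N ->
  (forall A : {set T}, \sum_(t in A) w t <= psum r #|A|) ->
  \sum_t w t = \sum_i r i ->
  \sum_i phi (r i) <= \sum_t phi (w t).
Proof.
move=> w_ge0 r_ge0 nT w_major w_total.
have [y [y_ge0 y_anti y_sum y_prefix]] := decreasing_rearrangement w_ge0.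
pose x k := psum r k.+1 - psum r k.
have x_prefix k : \sum_(0 <= i < k) x i = psum r k.
  by rewrite telescope_sumr // psum0 subr0.
have x_ge0 k : 0 <= x k by rewrite subr_ge0 le_psum.
have x_tail : \sum_(n <= i < #|T|) phi (x i) = 0.
  rewrite big_nat_cond big1 // => i /andP[/andP[ni _] _].
  by rewrite /x !psum_full ?subrr // leqW.
have -> : \sum_i phi (r i) = \sum_(0 <= i < #|T|) phi (x i).
  rewrite (big_cat_nat (leq0n n) nT) /= x_tail addr0 big_mkord.
  by apply: eq_bigr => i _; rewrite /x psumS addrC addKr.
rewrite -y_sum; apply: (karamata g_anti phi_tangent) => // [k kT|].
  by have [A <- ->] := y_prefix k kT; rewrite x_prefix w_major.
by rewrite x_prefix psum_full // -w_total -(y_sum id).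
Qed.

Lemma meet_majorizes_product n (p q : 'I_n -> R) : prob_vec p -> prob_vec q ->
  \sum_i phi (meet p q i) <= \sum_(t : 'I_n * 'I_n) phi (p t.1 * q t.2).
Proof.
move=> [p_ge0 [p1 p_anti]] [q_ge0 [q1 q_anti]].
apply: majorized_sum_le => [t | i | | A | ].
- by rewrite mulr_ge0.
- exact: meet_ge0.
- by rewrite card_prod card_ord; case: (posnP n) => [->|/leq_pmulr].
- rewrite psum_meet le_min sum_mul_le_psum //=.
  pose swap (t : 'I_n * 'I_n) := (t.2, t.1).
  have swap_inj : injective swap by move=> [? ?] [? ?] [-> ->].
  rewrite -[#|A|](card_imset _ swap_inj).
  under eq_bigr do rewrite mulrC.
  have -> : \sum_(t in A) q t.2 * p t.1 = \sum_(t in swap @: A) q t.1 * p t.2.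
    by rewrite big_imset //; apply: in2W.
  exact: sum_mul_le_psum.
- rewrite sum_meet // -(pair_bigA _ (fun i j => p i * q j)) /=.
  by under eq_bigr do rewrite -mulr_sumr q1 mulr1.
Qed.

End Majorization.

Section PowerAndEntropy.
Context {R : realType}.

Lemma powR_le_bernoulli (a t : R) : 0 <= a <= 1 -> 0 <= t ->
  t `^ a <= a * t + (1 - a).
Proof.
move=> /andP[a_ge0 a_le1] t_ge0.
have [->|a_neq0] := eqVneq a 0; first by rewrite powRr0 mul0r add0r subr0.
have [->|a_neq1] := eqVneq a 1; first by rewrite powRr1 // mul1r subrr addr0.
have a_gt0 : 0 < a by rewrite lt_neqAle eq_sym a_neq0.
have a_lt1 : a < 1 by rewrite lt_neqAle a_neq1.
(* Young's inequality with the conjugate exponents 1/a and 1/(1-a) *)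
have := @conjugate_powR R (t `^ a) 1 a^-1 (1 - a)^-1 (powR_ge0 _ _) ler01.
rewrite !invr_gt0 a_gt0 subr_gt0 a_lt1 !invrK addrC subrK => /(_ isT isT erefl).
rewrite mulr1 -powRrM mulfV ?gt_eqF // powRr1 // powR1 mul1r => young.
by rewrite (le_trans young) // mulrC.
Qed.

Lemma bernoulli_le_powR (a t : R) : 1 <= a -> 0 <= t ->
  a * t + (1 - a) <= t `^ a.
Proof.
move=> a_ge1 t_ge0.
have a_gt0 : 0 < a by apply: lt_le_trans a_ge1.
have [->|a_neq1] := eqVneq a 1; first by rewrite powRr1 // mul1r subrr addr0.
have b_gt0 : 0 < 1 - a^-1.
  by rewrite subr_gt0 invf_lt1 // lt_neqAle eq_sym a_neq1.
(* Young's inequality with the conjugate exponents a and a/(a-1) *)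
have := @conjugate_powR R t 1 a (1 - a^-1)^-1 t_ge0 ler01 a_gt0.
rewrite invr_gt0 b_gt0 invrK addrC subrK => /(_ isT erefl).
rewrite mulr1 powR1 mul1r => young.
have := ler_wpM2l (ltW a_gt0) young.
have -> : a * (t `^ a / a + (1 - a^-1)) = t `^ a + a - 1 by field; rewrite gt_eqF.
lra.
Qed.

Lemma powR_tangentE (a u v : R) : 0 < v ->
  v `^ a + a * v `^ (a - 1) * (u - v) = (a * (u / v) + (1 - a)) * v `^ a.
Proof.
move=> v_gt0; rewrite powRB ?(gt_eqF v_gt0) ?implybT // powRr1 ?ltW //.
by field; rewrite gt_eqF.
Qed.

Lemma powR_tangent_le (a u v : R) : 0 <= a <= 1 -> 0 <= u -> 0 < v ->
  u `^ a <= v `^ a + a * v `^ (a - 1) * (u - v).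
Proof.
move=> a01 u_ge0 v_gt0; rewrite powR_tangentE // -{1}(divfK (lt0r_neq0 v_gt0) u).
have uv_ge0 : 0 <= u / v := divr_ge0 u_ge0 (ltW v_gt0).
by rewrite (powRM _ uv_ge0 (ltW v_gt0)) ler_pM2r ?powR_gt0 // powR_le_bernoulli.
Qed.

Lemma powR_tangent_ge (a u v : R) : 1 <= a -> 0 <= u -> 0 < v ->
  v `^ a + a * v `^ (a - 1) * (u - v) <= u `^ a.
Proof.
move=> a_ge1 u_ge0 v_gt0; rewrite powR_tangentE // -{2}(divfK (lt0r_neq0 v_gt0) u).
have uv_ge0 : 0 <= u / v := divr_ge0 u_ge0 (ltW v_gt0).
by rewrite (powRM _ uv_ge0 (ltW v_gt0)) ler_pM2r ?powR_gt0 // bernoulli_le_powR.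
Qed.

Lemma le0_ger_powR (e x y : R) : e <= 0 -> 0 < x -> x <= y -> y `^ e <= x `^ e.
Proof.
move=> e_le0 x_gt0 xy; have y_gt0 : 0 < y by apply: lt_le_trans xy.
by rewrite /powR !gt_eqF // ler_expR ler_wnM2l // ler_ln.
Qed.

Lemma negxlnx_tangent (u v : R) : 0 <= u -> 0 < v ->
  - (u * ln u) <= - (v * ln v) + (- ln v - 1) * (u - v).
Proof.
rewrite le_eqVlt => /predU1P[<-|u_gt0] v_gt0.
  have -> : - (v * ln v) + (- ln v - 1) * (0 - v) = v by ring.
  by rewrite mul0r oppr0 ltW.
have : ln (v / u) <= v / u - 1.
  rewrite -[X in ln X](subrK 1) addrC le_ln1Dx //.
  by rewrite ltrBrDr addNr divr_gt0.
rewrite ln_div ?posrE // => /(ler_wpM2l (ltW u_gt0)).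
have -> : u * (v / u - 1) = v - u by field; rewrite gt_eqF.
move=> h; nra.
Qed.

Lemma negxlnxM (u v : R) : 0 <= u -> 0 <= v ->
  - (u * v * ln (u * v)) = v * - (u * ln u) + u * - (v * ln v).
Proof.
rewrite !le_eqVlt => /predU1P[<-|u_gt0] /predU1P[<-|v_gt0];
  rewrite ?(mul0r, mulr0, oppr0, addr0) //.
by rewrite lnM ?posrE //; ring.
Qed.

End PowerAndEntropy.

Section PositivePower.
Context {R : realType}.

(* [0 `^ 0 = 1], whereas [powsum] sums over the support only *)
Definition powRpos (a u : R) := if 0 < u then u `^ a else 0.

Lemma powRpos_le (a u : R) : powRpos a u <= u `^ a.
Proof. by rewrite /powRpos; case: ifP => // _; apply: powR_ge0. Qed.

Lemma powRposE (a u : R) : a != 0 -> 0 <= u -> powRpos a u = u `^ a.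
Proof.
move=> a_neq0; rewrite le_eqVlt => /predU1P[<-|u_gt0]; rewrite /powRpos ?u_gt0 //.
by rewrite ltxx powR0.
Qed.

Lemma powRposM (a u v : R) : 0 <= u -> 0 <= v ->
  powRpos a (u * v) = powRpos a u * powRpos a v.
Proof.
rewrite !le_eqVlt => /predU1P[<-|u_gt0] /predU1P[<-|v_gt0];
  rewrite /powRpos ?(mul0r, mulr0, ltxx) //.
by rewrite mulr_gt0 // u_gt0 v_gt0 powRM ?ltW.
Qed.

Lemma powRpos_tangent_le (a u v : R) : 0 <= a <= 1 -> 0 <= u -> 0 < v ->
  powRpos a u <= powRpos a v + a * v `^ (a - 1) * (u - v).
Proof.
move=> a01 u_ge0 v_gt0; have -> : powRpos a v = v `^ a by rewrite /powRpos v_gt0.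
by rewrite (le_trans (powRpos_le _ _)) // powR_tangent_le.
Qed.

Lemma powRpos_tangent_ge (a u v : R) : 1 <= a -> 0 <= u -> 0 < v ->
  powRpos a v + a * v `^ (a - 1) * (u - v) <= powRpos a u.
Proof.
move=> a_ge1 u_ge0 v_gt0; have a_neq0 : a != 0 by rewrite gt_eqF // (lt_le_trans ltr01).
rewrite (powRposE _ _ a_neq0 u_ge0) (powRposE _ _ a_neq0 (ltW v_gt0)).
exact: powR_tangent_ge.
Qed.

End PositivePower.

Section Entropies.
Context {R : realType} {n : nat}.
Implicit Types p q : 'I_n -> R.

Definition renyi (a : R) p :=
  if a == 1 then shannon p else ln (powsum a p) / (1 - a).

Lemma powsumE a p : powsum a p = \sum_i powRpos a (p i).
Proof. by rewrite /powsum big_mkcond. Qed.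

Lemma shannonE p : (forall i, 0 <= p i) -> shannon p = \sum_i - (p i * ln (p i)).
Proof.
move=> p_ge0; rewrite /shannon -sumrN big_mkcond; apply: eq_bigr => i _.
case: ifPn => // p_le0; have -> : p i = 0 by apply/eqP; rewrite eq_le p_ge0 leNgt p_le0.
by rewrite mul0r oppr0.
Qed.

Lemma powsum_mul a p q : (forall i, 0 <= p i) -> (forall i, 0 <= q i) ->
  \sum_(t : 'I_n * 'I_n) powRpos a (p t.1 * q t.2) = powsum a p * powsum a q.
Proof.
move=> p_ge0 q_ge0; rewrite !powsumE -(pair_bigA _ (fun i j => powRpos a (p i * q j))).
rewrite mulr_suml; apply: eq_bigr => i _; rewrite mulr_sumr; apply: eq_bigr => j _.
exact: powRposM.
Qed.

Lemma shannon_mul p q : (forall i, 0 <= p i) -> (forall i, 0 <= q i) ->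
  \sum_i p i = 1 -> \sum_i q i = 1 ->
  \sum_(t : 'I_n * 'I_n) - (p t.1 * q t.2 * ln (p t.1 * q t.2)) = shannon p + shannon q.
Proof.
move=> p_ge0 q_ge0 p1 q1; rewrite !shannonE //.
rewrite -(pair_bigA _ (fun i j => - (p i * q j * ln (p i * q j)))) /=.
under eq_bigr do under eq_bigr do rewrite negxlnxM //.
under eq_bigr do rewrite big_split /= -mulr_suml -mulr_sumr q1 mul1r.
by rewrite big_split /= -mulr_suml p1 mul1r.
Qed.

Section Distribution.
Context {p : 'I_n -> R}.
Hypothesis p_ge0 : forall i, 0 <= p i.
Hypothesis p1 : \sum_i p i = 1.

Lemma prob_le1 i : p i <= 1.
Proof. by rewrite -p1 (bigD1 i) //= lerDl sumr_ge0. Qed.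

Lemma powsum_gt0 a : 0 < powsum a p.
Proof.
have [i p_gt0] : exists i, 0 < p i.
  apply/not_existsP => p_le0; have : \sum_i p i <= 0.
    by apply: sumr_le0 => i _; rewrite leNgt; apply/negP/p_le0.
  by rewrite p1 ler10.
rewrite powsumE (bigD1 i) //= ltr_pwDl ?sumr_ge0 //; last first.
  by move=> j _; rewrite /powRpos; case: ifP => // _; apply: powR_ge0.
by rewrite /powRpos p_gt0 powR_gt0.
Qed.

Lemma powsum_ge1 a : a <= 1 -> 1 <= powsum a p.
Proof.
move=> a_le1; rewrite -[1]p1 powsumE; apply: ler_sum => i _.
rewrite /powRpos; case: ifPn => p_gt0; last by rewrite leNgt.
by rewrite ger1_powR // p_gt0 prob_le1.
Qed.

Lemma powsum_le1 a : 1 <= a -> powsum a p <= 1.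
Proof.
move=> a_ge1; rewrite -[1]p1 powsumE; apply: ler_sum => i _.
rewrite /powRpos; case: ifPn => // p_gt0.
by rewrite ge1r_powR // p_gt0 prob_le1.
Qed.

Lemma shannon_ge0 : 0 <= shannon p.
Proof.
rewrite shannonE //; apply: sumr_ge0 => i _.
by rewrite oppr_ge0 mulr_ge0_le0 // ln_le0 // prob_le1.
Qed.

Lemma renyi_ge0 a : 0 <= renyi a p.
Proof.
rewrite /renyi; case: eqP => _; first exact: shannon_ge0.
have [/ltW a_le1|a_ge1] := ltP a 1.
  by rewrite divr_ge0 ?subr_ge0 ?ln_ge0 ?powsum_ge1.
by rewrite mulr_le0 ?ln_le0 ?powsum_le1 // invr_le0 subr_le0.
Qed.

Lemma sharma_mittal_renyi a b : sharma_mittal a b p =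
  if b == 1 then renyi a p else (expR ((1 - b) * renyi a p) - 1) / (1 - b).
Proof.
rewrite /sharma_mittal /renyi; case: eqP => // _; case: eqP => // _.
by rewrite /powR gt_eqF ?powsum_gt0 // mulrAC mulrA.
Qed.

End Distribution.
End Entropies.

Section MeetEntropies.
Context {R : realType} {n : nat}.
Variables p q : 'I_n -> R.
Hypotheses (hp : prob_vec p) (hq : prob_vec q).

Let p_ge0 : forall i, 0 <= p i. Proof. by case: hp. Qed.
Let q_ge0 : forall i, 0 <= q i. Proof. by case: hq. Qed.
Let p1 : \sum_i p i = 1. Proof. by case: hp => _ []. Qed.
Let q1 : \sum_i q i = 1. Proof. by case: hq => _ []. Qed.
Let r_ge0 i : 0 <= meet p q i. Proof. exact: meet_ge0. Qed.

Lemma shannon_meet_le : shannon (meet p q) <= shannon p + shannon q.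
Proof.
rewrite shannonE // -shannon_mul //.
apply: (meet_majorizes_product (phi := fun u => - (u * ln u))
                               (g := fun v => - ln v - 1)) => //.
- by rewrite mul0r oppr0.
- move=> u v u_gt0 uv; rewrite lerD2r lerN2 ler_ln // posrE.
  exact: lt_le_trans uv.
- exact: negxlnx_tangent.
Qed.

Lemma powsum_meet_le a : 0 <= a <= 1 ->
  powsum a (meet p q) <= powsum a p * powsum a q.
Proof.
move=> /andP[a_ge0 a_le1]; rewrite powsumE -powsum_mul //.
apply: (meet_majorizes_product (phi := powRpos a)
                               (g := fun v => a * v `^ (a - 1))) => //.
- by rewrite /powRpos ltxx.
- by move=> u v u_gt0 uv; rewrite ler_wpM2l // le0_ger_powR // subr_le0.
- by move=> u v u_ge0 v_gt0; rewrite powRpos_tangent_le ?a_ge0.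
Qed.

Lemma powsum_meet_ge a : 1 <= a ->
  powsum a p * powsum a q <= powsum a (meet p q).
Proof.
move=> a_ge1; rewrite -lerN2 powsumE -powsum_mul // -!sumrN.
apply: (meet_majorizes_product (phi := fun u => - powRpos a u)
                               (g := fun v => - (a * v `^ (a - 1)))) => //.
- by rewrite /powRpos ltxx oppr0.
- move=> u v u_gt0 uv; rewrite lerN2 ler_wpM2l ?(le_trans ler01 a_ge1) //.
  have v_gt0 := lt_le_trans u_gt0 uv.
  by apply: ge0_ler_powR; rewrite ?subr_ge0 ?nnegrE ?(ltW u_gt0) ?(ltW v_gt0).
- by move=> u v u_ge0 v_gt0; rewrite mulNr -opprD lerN2 powRpos_tangent_ge.
Qed.

Lemma renyi_meet_le a : 0 <= a -> renyi a (meet p q) <= renyi a p + renyi a q.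
Proof.
move=> a_ge0; rewrite /renyi; case: eqP => [_|a_neq1].
  exact: shannon_meet_le.
have Pr := powsum_gt0 (sum_meet p1 q1) a.
have PpPq := mulr_gt0 (powsum_gt0 p1 a) (powsum_gt0 q1 a).
rewrite -mulrDl -lnM ?posrE ?powsum_gt0 //.
have [a_lt1|a_gt1|/a_neq1 []] := ltgtP a 1.
- rewrite ler_pM2r ?invr_gt0 ?subr_gt0 // ler_ln ?posrE //.
  by rewrite powsum_meet_le // a_ge0 (ltW a_lt1).
- rewrite ler_nM2r ?invr_lt0 ?subr_lt0 // ler_ln ?posrE //.
  by rewrite powsum_meet_ge // ltW.
Qed.

End MeetEntropies.

Lemma expR_sub1_div_subadditive {R : realType} (c x y z : R) :
  c < 0 -> 0 <= y -> 0 <= z -> x <= y + z ->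
  (expR (c * x) - 1) / c <= (expR (c * y) - 1) / c + (expR (c * z) - 1) / c.
Proof.
move=> c_lt0 y_ge0 z_ge0 xyz.
have ey : expR (c * y) <= 1 by rewrite expR_le1 mulr_le0_ge0 // ltW.
have ez : expR (c * z) <= 1 by rewrite expR_le1 mulr_le0_ge0 // ltW.
have eyz : expR (c * y) * expR (c * z) <= expR (c * x).
  by rewrite -expRD ler_expR -mulrDr ler_wnM2l // ltW.
rewrite -mulrDl ler_nM2r ?invr_lt0 //; nra.
Qed.

Theorem corollary1 (R : realType) (n : nat) (alpha beta : R)
  (halpha : 0 <= alpha) (hbeta : 1 <= beta) (p q : 'I_n -> R) :
  prob_vec p -> prob_vec q ->
  sharma_mittal alpha beta (meet p q) <=
    sharma_mittal alpha beta p + sharma_mittal alpha beta q.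
Proof.
move=> hp hq; have [p_ge0 [p1 _]] := hp; have [q_ge0 [q1 _]] := hq.
have r1 := sum_meet p1 q1.
rewrite !sharma_mittal_renyi //.
case: eqP => [_|/eqP beta_neq1]; first exact: renyi_meet_le.
apply: expR_sub1_div_subadditive; [|exact: renyi_ge0..|exact: renyi_meet_le].
by rewrite subr_lt0 lt_neqAle eq_sym beta_neq1.
Qed.
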